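(* Let $k \geq 2$ be an integer, let $G$ be a $k$-connected $(K_2 \cup kK_1)$-free graph, and let $C$ be a longest cycle in $G$. Then every component of $G - V(C)$ consists of a single vertex.
   Context: All graphs are finite, undirected and simple. For graphs $R, R'$, $R \cup R'$ is their disjoint union and $kR$ is the disjoint union of $k$ copies of $R$; $K_n$ is the complete graph on $n$ vertices. A graph $G$ is $R$-free if it contains no induced subgraph isomorphic to $R$. *)

(* A simple graph is a symmetric irreflexive relation e on a finType T. *)
From mathcomp Require Import all_boot all_order.
Set Implicit Arguments. Unset Strict Implicit. Unset Printing Implicit Defensive.

Definition restrict_rel (T : finType) (e : rel T) (S : pred T) : rel T :=
  [rel a b | [&& e a b, S a & S b]].

Definition k_connected (T : finType) (e : rel T) (k : nat) : Prop :=
  k < #|T| /\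
  forall X : {set T}, #|X| < k ->
    forall x y, x \notin X -> y \notin X ->
      connect (restrict_rel e [pred v | v \notin X]) x y.

Definition induced_sub (V : finType) (eR : rel V) (T : finType) (e : rel T) : Prop :=
  exists f : V -> T, injective f /\ forall x y, e (f x) (f y) = eR x y.

Definition free (V : finType) (eR : rel V) (T : finType) (e : rel T) : Prop :=
  ~ induced_sub eR e.

Definition K2_kK1 (k : nat) : rel 'I_(k.+2) :=
  [rel x y | ((val x == 0) && (val y == 1)) || ((val x == 1) && (val y == 0))].

Definition is_cycle (T : finType) (e : rel T) (c : seq T) : Prop :=
  [/\ uniq c, 2 < size c & cycle e c].

Definition longest_cycle (T : finType) (e : rel T) (c : seq T) : Prop :=
  is_cycle e c /\ forall c', is_cycle e c' -> size c' <= size c.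
Arguments K2_kK1 k : clear implicits.

From mathcomp Require Import all_boot all_order.
Set Implicit Arguments. Unset Strict Implicit. Unset Printing Implicit Defensive.

(* Suppose the component H of G - V(C) containing x has an edge x x1, and let
   N be the set of vertices of C with a neighbour in H.  For distinct u, w in N
   the successors u+, w+ on C are non-adjacent, since otherwise C could be
   rerouted through H into a longer cycle; taking w = u+ shows that u+ is not in
   N, i.e. u+ has no neighbour in H.  Deleting N therefore separates H from the
   nonempty set V(C) - N, so |N| >= k, and x, x1 together with the successors of
   k vertices of N induce K_2 \cup k K_1. *)

Section Paths.
Variables (T : finType) (r : rel T).

Lemma path_restrict_rel (S : pred T) a p :
  path (restrict_rel r S) a p -> path r a p && all S p.
Proof.
elim: p a => //= b p IHp a /andP[/and3P[rab _ Sb] /IHp /andP[-> ->]].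
by rewrite rab Sb.
Qed.

Lemma restrict_rel_sym (S : pred T) :
  symmetric r -> symmetric (restrict_rel r S).
Proof. by move=> rsym a b; rewrite /restrict_rel /= rsym (andbC (S a)). Qed.

Lemma cycle_cons_cat x0 p1 y0 p2 :
  cycle r (x0 :: p1 ++ y0 :: p2) =
  [&& path r x0 p1, r (last x0 p1) y0, path r y0 p2 & r (last y0 p2) x0].
Proof. by rewrite /= rcons_cat cat_path /= rcons_path. Qed.

Lemma cycle_reroute x0 p1 y0 p2 a P : symmetric r ->
    path r x0 p1 -> r x0 y0 -> path r y0 p2 ->
    path r a P -> r (last y0 p2) a -> r (last a P) (last x0 p1) ->
  cycle r ((a :: P) ++ rev (x0 :: p1) ++ y0 :: p2).
Proof.
move=> rsym p1P rx0y0 p2P PP ra rb.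
set l := last x0 p1; set R := rev (belast x0 p1).
have rev_p1 : rev (x0 :: p1) = l :: R by rewrite {1}(lastI x0 p1) rev_rcons.
have last_R : last l R = x0 by rewrite -(last_cons x0) -rev_p1 rev_cons last_rcons.
have R_path : path r l R.
  by rewrite rev_path (@eq_path _ _ r) // => z1 z2; exact: rsym.
rewrite rev_p1 catA !cat_cons cycle_cons_cat cat_path PP /= rb R_path.
by rewrite !last_cat /= last_R rx0y0 p2P ra.
Qed.

End Paths.

Section InducedK2kK1.
Variables (T : finType) (r : rel T).
Hypotheses (rsym : symmetric r) (rirr : irreflexive r).

Lemma induced_K2_kK1 k x y (g : 'I_k -> T) :
    r x y -> injective g -> (forall i, ~~ r (g i) x && ~~ r (g i) y) ->
    (forall i j, ~~ r (g i) (g j)) ->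
  induced_sub (K2_kK1 k) r.
Proof.
move=> rxy g_inj g_xy g_indep.
have g_x i : r (g i) x = false by case/andP: (g_xy i) => /negbTE.
have g_y i : r (g i) y = false by case/andP: (g_xy i) => _ /negbTE.
have g_ne i : (g i != x) && (g i != y).
  apply/andP; split; [apply: contraFneq (g_y i) | apply: contraFneq (g_x i)].
    by move=> ->.
  by move=> ->; rewrite rsym.
have xy : x != y by apply: contraTneq rxy => ->; rewrite rirr.
pose f (i : 'I_k.+2) := match i with
  | Ordinal 0 _ => x | Ordinal 1 _ => y | Ordinal j.+2 hj => g (Ordinal (hj : j < k))
  end.
exists f; split.
- move=> [[|[|i]] hi] [[|[|j]] hj] //= fij; apply: val_inj => //=.
  + by rewrite fij eqxx in xy.
  + by move: (g_ne (Ordinal (hj : j < k))); rewrite -fij eqxx.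
  + by rewrite fij eqxx in xy.
  + by move: (g_ne (Ordinal (hj : j < k))); rewrite -fij eqxx andbF.
  + by move: (g_ne (Ordinal (hi : i < k))); rewrite fij eqxx.
  + by move: (g_ne (Ordinal (hi : i < k))); rewrite fij eqxx andbF.
  + by move/(congr1 val): (g_inj _ _ fij) => /= ->.
- move=> [[|[|i]] hi] [[|[|j]] hj]; rewrite /K2_kK1 /= ?rirr //.
  + by rewrite (rsym x) g_x.
  + by rewrite rsym.
  + by rewrite (rsym y) g_y.
  + exact/negbTE/g_indep.
Qed.

End InducedK2kK1.

Section LongestCycle.
Variables (T : finType) (e : rel T) (c : seq T).
Hypotheses (esym : symmetric e) (eirr : irreflexive e)
  (c_longest : longest_cycle e c).

Let c_uniq : uniq c. Proof. by case: c_longest => -[]. Qed.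
Let c_cycle : cycle e c. Proof. by case: c_longest => -[]. Qed.

Lemma next_inj : injective (next c).
Proof. exact: (can_inj (prev_next c_uniq)). Qed.

Local Notation outside := (restrict_rel e [pred v | v \notin c]).

Lemma connect_outside_path a b : a \notin c -> connect outside a b ->
  exists P, [/\ path e a P, uniq (a :: P), all [pred v | v \notin c] (a :: P)
              & last a P = b].
Proof.
move=> ac /connectP[p pR ->]; case: (shortenP pR) => P PR P_uniq _.
by have /andP[PP Pc] := path_restrict_rel PR; exists P; rewrite /= ac.
Qed.

(* An ear of [c] from [u] to [w] through [G - V(c)], together with an edge
   [next c u -- next c w], gives the longer cycle
   ear ++ reversed arc [next c u .. w] ++ arc [next c w .. u]. *)
Lemma ear_next_nonadjacent u w a b :
    u \in c -> w \in c -> u != w -> a \notin c -> connect outside a b ->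
    e u a -> e w b ->
  ~~ e (next c u) (next c w).
Proof.
move=> uc wc uw ac ab eua ewb; apply/negP => exy.
have [P [PP P_uniq P_out Pb]] := connect_outside_path ac ab; subst b.
set x0 := next c u; set y0 := next c w.
have x0y0 : x0 != y0 by apply: contra uw => /eqP/next_inj/eqP.
have x0c : x0 \in c by rewrite mem_next.
have y0c : y0 \in c by rewrite mem_next.
have [i p1 p2 _ _ crot] := rot_to_arc c_uniq x0c y0c x0y0.
have := c_cycle; rewrite -(rot_cycle i) crot cycle_cons_cat.
case/and4P=> p1P _ p2P _.
have := cycle_next c_uniq; rewrite -(rot_cycle i) crot cycle_cons_cat.
case/and4P=> _ /eqP/next_inj last_p1 _ /eqP/next_inj last_p2.
have c_perm : perm_eq (rev (x0 :: p1) ++ y0 :: p2) c.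
  by rewrite perm_sym -(perm_rot i c) crot -cat_cons perm_cat2r perm_sym perm_rev.
have [[_ c_size _] c_max] := c_longest.
suff /c_max : is_cycle e ((a :: P) ++ rev (x0 :: p1) ++ y0 :: p2).
  by rewrite size_cat (perm_size c_perm) /= addSn ltnNge leq_addl.
rewrite /is_cycle; split.
- rewrite cat_uniq P_uniq (perm_uniq c_perm) c_uniq andbT.
  apply/hasPn => v; rewrite (perm_mem c_perm) => vc; apply/negP => vP.
  by move/allP: P_out => /(_ v vP); rewrite /= vc.
- by rewrite size_cat (perm_size c_perm) ltn_addl.
- by apply: cycle_reroute => //; rewrite ?last_p2 // last_p1 esym.
Qed.

Variable x : T.
Hypothesis xc : x \notin c.

Definition attachments := [set u in c | [exists v, connect outside x v && e u v]].

Lemma component_outside v : connect outside x v -> v \notin c.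
Proof.
case/(connect_outside_path xc) => P [_ _ /allP P_out <-].
exact: P_out (mem_last x P).
Qed.

Lemma next_attachments_nonadjacent u w :
  u \in attachments -> w \in attachments -> u != w ->
  ~~ e (next c u) (next c w).
Proof.
rewrite !inE => /andP[uc /existsP[a /andP[xa eua]]].
move=> /andP[wc /existsP[b /andP[xb ewb]]] uw.
apply: (ear_next_nonadjacent uc wc uw (component_outside xa) _ eua ewb).
by apply: connect_trans xb; rewrite (sym_connect_sym (restrict_rel_sym _ esym)).
Qed.

Lemma next_attachment_notin u : u \in attachments -> next c u \notin attachments.
Proof.
move=> uN; have uc : u \in c by case/setIdP: uN.
have e_next := next_cycle c_cycle.
apply/negP => /(next_attachments_nonadjacent uN)/implyP; rewrite implyNb.
apply/negP/norP; split; last by rewrite e_next ?mem_next.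
by apply: contraTneq (e_next _ uc) => <-; rewrite eirr.
Qed.

Lemma next_attachment_nonadjacent_component u v :
  u \in attachments -> connect outside x v -> ~~ e (next c u) v.
Proof.
move=> uN xv; apply: contra (next_attachment_notin uN) => e_next.
rewrite inE mem_next (setIdP uN).1; apply/existsP; exists v.
by rewrite xv e_next.
Qed.

Lemma connect_avoiding_attachments z :
  connect (restrict_rel e [pred v | v \notin attachments]) x z ->
  connect outside x z.
Proof.
case/connectP => p; elim/last_ind: p z => [|p b IHp] z; first by move=> _ ->.
rewrite rcons_path last_rcons => /andP[/IHp/(_ erefl) xa /and3P[eab _ bN]] ->.
have bc : b \notin c.
  apply: contra bN => bc; rewrite inE bc; apply/existsP.
  by exists (last x p); rewrite xa esym.
apply: (connect_trans xa (connect1 _)).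
by rewrite /restrict_rel /= eab bc (component_outside xa).
Qed.

Lemma attachments_card k : k_connected e k -> k <= #|attachments|.
Proof.
case=> _ k_conn; rewrite leqNgt; apply/negP => smallN.
have [z zc zN] : exists2 z, z \in c & z \notin attachments.
  have [u uc] : exists u, u \in c.
    by case: c c_longest => [[[_]]|u ? _]; [|exists u; rewrite mem_head].
  have [uN | uN] := boolP (u \in attachments); last by exists u.
  by exists (next c u); rewrite ?mem_next ?next_attachment_notin.
have xN : x \notin attachments by apply: contra xc => /setIdP[].
have /connect_avoiding_attachments/component_outside := k_conn _ smallN x z xN zN.
by rewrite zc.
Qed.

Lemma component_edge_induced_K2_kK1 k x1 :
  k_connected e k -> e x x1 -> x1 \notin c -> induced_sub (K2_kK1 k) e.
Proof.
move=> k_conn ex1 x1c; have kN := attachments_card k_conn.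
pose u (i : 'I_k) := enum_val (widen_ord kN i).
have uN i : u i \in attachments := enum_valP _.
have u_inj : injective u.
  by move=> i j /enum_val_inj/(congr1 val) /= ?; apply: val_inj.
apply: (@induced_K2_kK1 _ _ esym eirr _ _ _ (next c \o u) ex1).
- by move=> i j /next_inj/u_inj.
- move=> i; have nadj := next_attachment_nonadjacent_component (uN i).
  rewrite /= (nadj x (connect0 _ _)) nadj //.
  by apply: connect1; rewrite /restrict_rel /= ex1 xc.
- move=> i j; have [-> | ij] := eqVneq i j; first by rewrite /= eirr.
  by rewrite /= next_attachments_nonadjacent ?(inj_eq u_inj).
Qed.

End LongestCycle.

Theorem mainTheorem8 (k : nat) (T : finType) (e : rel T) :
  2 <= k -> symmetric e -> irreflexive e ->
  k_connected e k -> free (K2_kK1 k) e ->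
  forall c : seq T, longest_cycle e c ->
  forall x y : T, x \notin c -> y \notin c ->
    connect (restrict_rel e [pred v | v \notin c]) x y -> x = y.
Proof.
move=> _ esym eirr k_conn K_free c c_longest x y xc _.
case/connectP => -[_ -> // | x1 p /= /andP[/and3P[ex1 _ x1c] _] _].
case: K_free.
exact: (component_edge_induced_K2_kK1 esym eirr c_longest xc k_conn ex1).
Qed.
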